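(* Let $p$ be a prime and $\lambda$ a partition with $r(\lambda)=(r_1,\ldots,r_{p-1})$. Suppose $p\nmid|\lambda|$ and there exist distinct $a,c\in\{1,\ldots,p-1\}$ with $r_a=r_c=\max r(\lambda)$. Then $c^{(p)}_\lambda\neq0$.
   Context: A composition is a finite sequence $\delta=(\delta_1,\ldots,\delta_s)$ of positive integers, $\ell(\delta)=s$, $|\delta|=\sum_i\delta_i$; a partition is a composition with weakly decreasing parts. Partial sums $\delta^+_j=\sum_{i=1}^j\delta_i$. $n_d(\delta)$ is the number of parts of $\delta$ equal to $d$. A composition is $p'$-cumulative if it is nonempty and $p\nmid\delta^+_j$ for all $1\le j\le\ell(\delta)$. $c^{(p)}_\lambda$ is the number of $p'$-cumulative compositions that are rearrangements of $\lambda$. For $1\le j\le p-1$, $r_j(\lambda)=\sum_{i\equiv j\,(\mathrm{mod}\ p)}n_i(\lambda)$, $r(\lambda)=(r_1(\lambda),\ldots,r_{p-1}(\lambda))$, and $\max r(\lambda)$ is its largest entry. *)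

From mathcomp Require Import all_boot.
Set Implicit Arguments. Unset Strict Implicit. Unset Printing Implicit Defensive.

Definition is_composition (d : seq nat) : bool := all (fun x => 0 < x) d.
Definition is_partition (l : seq nat) : bool :=
  is_composition l && sorted geq l.

Definition psum (d : seq nat) (j : nat) : nat := sumn (take j d).

Definition nparts (d : seq nat) (x : nat) : nat := count_mem x d.

Definition pcumulative (p : nat) (d : seq nat) : bool :=
  (d != [::]) && all (fun j => ~~ (p %| psum d j)) (iota 1 (size d)).

Definition cp (p : nat) (l : seq nat) : nat :=
  count (pcumulative p) (undup (permutations l)).

Definition rj (p : nat) (l : seq nat) (j : nat) : nat :=
  \sum_(0 <= i < (sumn l).+1 | i %% p == j %% p) nparts l i.

Definition maxr (p : nat) (l : seq nat) : nat :=
  \max_(1 <= j < p) rj p l j.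

From mathcomp Require Import all_boot zify.

Set Implicit Arguments.
Unset Strict Implicit.
Unset Printing Implicit Defensive.

(* Only the parts prime to p matter: the multiples of p can be inserted right
   after the first part of any p'-cumulative ordering of the others.  With n
   such parts, the hypothesis gives 2 r_j <= r_a + r_c <= n for every nonzero
   class j.  A multiset of n nonzero residues with nonzero total, no class of
   which has more than (n+1)/2 members, can be ordered greedily so that no
   partial sum vanishes: start with a member of the majority class if there is
   one (preceded by a member of another class if that first step is forbidden),
   and otherwise with any part that is not forbidden; the rest stays balanced. *)

Fixpoint pcumulative_from (p t : nat) (s : seq nat) : bool :=
  if s is x :: s' then ~~ (p %| t + x) && pcumulative_from p (t + x) s' else true.

Lemma pcumulative_fromE p t s :
  pcumulative_from p t s = all (fun j => ~~ (p %| t + psum s j)) (iota 1 (size s)).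
Proof.
elim: s t => [|x s IH] t //=.
rewrite /psum /= IH take0 addn0 -[2]/(1 + 1) iotaDl all_map.
congr (_ && _); apply: eq_all => j /=.
by rewrite /psum /= addnA.
Qed.

Lemma pcumulativeE p d : pcumulative p d = (d != [::]) && pcumulative_from p 0 d.
Proof. by rewrite pcumulative_fromE. Qed.

Lemma pcumulative_from_cat p t s1 s2 :
  pcumulative_from p t (s1 ++ s2) =
  pcumulative_from p t s1 && pcumulative_from p (t + sumn s1) s2.
Proof.
elim: s1 t => [|x s1 IH] t /=; first by rewrite addn0.
by rewrite IH addnA andbA.
Qed.

Lemma pcumulative_from_shift p t k s :
  p %| k -> pcumulative_from p (t + k) s = pcumulative_from p t s.
Proof.
move=> pk; elim: s t => [|x s IH] t //=.
by rewrite addnAC IH dvdn_addl.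
Qed.

Lemma pcumulative_from_multiples p t s :
  ~~ (p %| t) -> all (dvdn p) s -> pcumulative_from p t s.
Proof.
elim: s t => [|x s IH] t //= pt /andP [px ps].
by rewrite dvdn_addl // pt IH // dvdn_addl.
Qed.

Lemma dvdn_sumn d s : all (dvdn d) s -> d %| sumn s.
Proof. by elim: s => //= x s IH /andP [dx /IH]; apply: dvdn_add. Qed.

Lemma pcumulative_from_insert_multiples p t x s z :
  all (dvdn p) z -> pcumulative_from p t (x :: s) ->
  pcumulative_from p t (x :: z ++ s).
Proof.
move=> pz /= /andP [ptx ps].
have pSz : p %| sumn z := dvdn_sumn pz.
rewrite ptx pcumulative_from_cat pcumulative_from_multiples //=.
by rewrite pcumulative_from_shift.
Qed.

Section BalancedArrangement.

Variable p : nat.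

Definition count_mod (y : nat) (s : seq nat) : nat :=
  count (fun x => x %% p == y %% p) s.

Definition balanced (s : seq nat) : Prop :=
  forall y, 2 * count_mod y s <= (size s).+1.

Lemma count_mod_disjoint y z s :
  y %% p != z %% p -> count_mod y s + count_mod z s <= size s.
Proof.
move=> yz; rewrite -count_predUI.
rewrite (@eq_count _ (predI _ _) pred0) ?count_pred0 ?addn0 ?count_size // => x /=.
by apply/negP => /andP [/eqP -> /eqP yzE]; rewrite yzE eqxx in yz.
Qed.

Lemma count_mod_rem x y (s : seq nat) :
  x \in s -> count_mod y (rem x s) = count_mod y s - (x %% p == y %% p).
Proof. by move=> xs; rewrite /count_mod count_rem xs. Qed.

Lemma eq_mod_of_dvdn_add t x y : p %| t + x -> p %| t + y -> x %% p = y %% p.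
Proof.
move=> ptx pty; apply/eqP; rewrite -(eqn_modDl t).
by move: ptx pty; rewrite /dvdn => /eqP -> /eqP ->.
Qed.

Lemma balanced_rem x (s : seq nat) :
  x \in s -> (forall z, 2 * count_mod z s <= size s) -> balanced (rem x s).
Proof.
move=> xs loose y; have n_gt0 : 0 < size s by case: (s) xs.
rewrite count_mod_rem // size_rem //; have := loose y; case: (_ == _) => /=; lia.
Qed.

Lemma count_mod_rem_majority y (s : seq nat) :
  y \in s -> 2 * count_mod y s = (size s).+1 ->
  forall z, 2 * count_mod z (rem y s) <= size (rem y s).
Proof.
move=> ys major z; rewrite count_mod_rem // size_rem //.
have [yz|yz] := eqVneq (y %% p) (z %% p) => /=.
  have -> : count_mod z s = count_mod y s by rewrite /count_mod yz.
  lia.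
by have := count_mod_disjoint s yz; lia.
Qed.

Definition admissible_start t s q r : Prop :=
  [/\ perm_eq s (q ++ r), q != [::], pcumulative_from p t q & balanced r].

Lemma admissible_start_majority t s y :
  y \in s -> 2 * count_mod y s = (size s).+1 ->
  all (fun x => ~~ (p %| x)) s -> ~~ (p %| t + sumn s) ->
  exists q r, admissible_start t s q r.
Proof.
move=> ys major nds nst; have loose := count_mod_rem_majority ys major.
have [pty | pty] := boolP (p %| t + y); last first.
  exists [:: y], (rem y s); split => //=; first exact: perm_to_rem.
    by rewrite pty.
  by move=> z; apply: leqW.
have [v vs vy] : exists2 v, v \in s & v %% p != y %% p.
  apply/hasP; apply: contraTT nst => /hasPn same; rewrite negbK.
  have all_y : count_mod y s = size s.
    by apply/eqP; rewrite -all_count; apply/allP => v /same; rewrite negbK.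
  have : size s = 1 by move: major; rewrite all_y mul2n -addnn -addn1 => /addnI.
  by case: (s) ys => [|w [|]] //=; rewrite mem_seq1 => /eqP <- _; rewrite addn0.
have vy' : v != y by apply: contraNneq vy => ->.
exists [:: v; y], (rem v (rem y s)); split => //=.
- apply: perm_trans (perm_to_rem ys) _; rewrite perm_sym.
  rewrite -[v :: _]/([:: v] ++ [:: y] ++ _) perm_catCA /= perm_cons perm_sym.
  by rewrite perm_to_rem // rem_mem.
- rewrite addnAC (dvdn_addr _ pty) (allP nds v vs) /= andbT.
  by apply: contra vy => ptv; rewrite (eq_mod_of_dvdn_add ptv pty).
- by apply: balanced_rem => //; apply: rem_mem.
Qed.

Lemma admissible_start_minority t s :
  s != [::] -> (forall z, 2 * count_mod z s <= size s) ->
  exists q r, admissible_start t s q r.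
Proof.
move=> s0 loose.
have [/hasP [x xs ptx] | /hasPn forbidden] := boolP (has (fun x => ~~ (p %| t + x)) s).
  exists [:: x], (rem x s); split => //=; first exact: perm_to_rem.
    by rewrite ptx.
  exact: balanced_rem.
case: {-1}s (erefl s) s0 => [|x0 s'] // sx0 _.
have x0s : x0 \in s by rewrite sx0 mem_head.
have : count_mod x0 s = size s.
  apply/eqP; rewrite -all_count; apply/allP => v vs.
  have := forbidden v vs; have := forbidden x0 x0s; rewrite !negbK => ptx0 ptv.
  by rewrite (eq_mod_of_dvdn_add ptv ptx0).
by have := loose x0; rewrite sx0 /=; lia.
Qed.

Lemma admissible_start_exists t s :
  s != [::] -> all (fun x => ~~ (p %| x)) s -> ~~ (p %| t + sumn s) -> balanced s ->
  exists q r, admissible_start t s q r.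
Proof.
move=> s0 nds nst bal.
have [/hasP [y ys major] | /hasPn minor] :=
  boolP (has (fun y => size s < 2 * count_mod y s) s).
  apply: (admissible_start_majority ys) => //.
  by apply/eqP; rewrite eqn_leq bal major.
apply: admissible_start_minority => // z.
have [/hasP [w ws /eqP wz] | none] := boolP (has (fun y => y %% p == z %% p) s).
  by have := minor w ws; rewrite -leqNgt /count_mod wz.
by move: none; rewrite has_count lt0n negbK /count_mod => /eqP ->.
Qed.

Lemma balanced_arrangement t s :
  all (fun x => ~~ (p %| x)) s -> ~~ (p %| t + sumn s) -> balanced s ->
  exists2 s', perm_eq s s' & pcumulative_from p t s'.
Proof.
move: {2}(size s) (erefl (size s)) => n.
elim/ltn_ind: n s t => n IH s t sz nds nst bal.
have [-> | s0] := eqVneq s [::]; first by exists [::].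
have [q [r [sqr q0 tq balr]]] := admissible_start_exists s0 nds nst bal.
have [r' rr' tr'] : exists2 r', perm_eq r r' & pcumulative_from p (t + sumn q) r'.
  apply: (IH (size r)) => //.
  - by move: q0; rewrite -sz (perm_size sqr) size_cat -size_eq0; lia.
  - by move: nds; rewrite (perm_all _ sqr) all_cat => /andP [].
  - by rewrite -addnA -sumn_cat -(perm_sumn sqr).
exists (q ++ r'); first by rewrite (perm_trans sqr) // perm_cat2l.
by rewrite pcumulative_from_cat tq.
Qed.

End BalancedArrangement.

Lemma pcumulative_perm_filter_nondiv p l s :
  perm_eq [seq x <- l | ~~ (p %| x)] s -> pcumulative p s ->
  exists2 d, perm_eq l d & pcumulative p d.
Proof.
set z := [seq x <- l | p %| x] => nzs.
rewrite pcumulativeE; case: s nzs => [|x s] // nzs /= ps.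
have pz : all (dvdn p) z by apply: filter_all.
exists (x :: z ++ s); last first.
  by rewrite pcumulativeE pcumulative_from_insert_multiples.
rewrite -(perm_filterC (dvdn p) l) perm_sym.
rewrite -[x :: _]/([:: x] ++ z ++ s) perm_catCA perm_cat2l.
by rewrite perm_sym.
Qed.

Lemma sum_nat_eq_index (P : pred nat) x N :
  \sum_(0 <= i < N | P i) (x == i) = P x && (x < N).
Proof.
rewrite big_mkcond; elim: N => [|N IH]; first by rewrite big_geq // andbF.
rewrite big_nat_recr //= IH [in RHS]ltnS.
by case: ltngtP => [||->] //=; case: (P N); rewrite /= ?addn0 ?andbF ?andbT.
Qed.

Lemma sum_count_mem (P : pred nat) N s : all (fun x => x < N) s ->
  \sum_(0 <= i < N | P i) count_mem i s = count P s.
Proof.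
elim: s => [|x s IH] /=; first by rewrite big1.
by move=> /andP [xN sN]; rewrite big_split /= sum_nat_eq_index IH // xN andbT.
Qed.

Lemma rjE p l j : rj p l j = count_mod p j l.
Proof.
rewrite /rj /nparts sum_count_mem //; apply/allP => x xl.
by rewrite ltnS (perm_sumn (perm_to_rem xl)) leq_addr.
Qed.

Lemma rj_le_maxr p l j : 0 < p -> ~~ (p %| j) -> rj p l j <= maxr p l.
Proof.
move=> p_gt0 pj.
have -> : rj p l j = rj p l (j %% p) by rewrite !rjE /count_mod modn_mod.
by apply: leq_bigmax_seq; rewrite // mem_index_iota ltn_pmod // andbT lt0n.
Qed.

Lemma count_mod_filter_nondiv p y l :
  count_mod p y [seq x <- l | ~~ (p %| x)] = if p %| y then 0 else count_mod p y l.
Proof.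
rewrite /count_mod count_filter /dvdn; case: eqP => [py | py].
  by rewrite (@eq_count _ _ pred0) ?count_pred0 // => x /=; rewrite py andbN.
by apply: eq_count => x /=; case: eqP => //= ->; apply/eqP.
Qed.

Lemma dvdn_sumn_filter_nondiv p l :
  (p %| sumn [seq x <- l | ~~ (p %| x)]) = (p %| sumn l).
Proof.
rewrite -(perm_sumn (permEl (perm_filterC (fun x => ~~ (p %| x)) l))) sumn_cat.
rewrite dvdn_addl // dvdn_sumn //.
by apply/allP => x; rewrite mem_filter /= negbK => /andP [].
Qed.

Lemma cp_neq0 p l d : perm_eq l d -> pcumulative p d -> cp p l != 0.
Proof.
move=> ld pd; rewrite /cp -lt0n -has_count; apply/hasP; exists d => //.
by rewrite mem_undup mem_permutations perm_sym.
Qed.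

Theorem mainTheorem5 (p : nat) (l : seq nat) (a c : nat) :
  prime p -> is_partition l -> ~~ (p %| sumn l) ->
  0 < a < p -> 0 < c < p -> a != c ->
  rj p l a = maxr p l -> rj p l c = maxr p l ->
  cp p l != 0.
Proof.
move=> pp _ pl /andP [a0 ap] /andP [c0 cp'] ac ra rc.
have p_gt0 := prime_gt0 pp.
set nz := [seq x <- l | ~~ (p %| x)].
have pa : ~~ (p %| a) by rewrite /dvdn modn_small // -lt0n.
have pc : ~~ (p %| c) by rewrite /dvdn modn_small // -lt0n.
have two_max : 2 * maxr p l <= size nz.
  have := @count_mod_disjoint p a c nz; rewrite !modn_small // => /(_ ac).
  by rewrite !count_mod_filter_nondiv (negbTE pa) (negbTE pc) -!rjE; lia.
have bal : balanced p nz.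
  move=> y; rewrite count_mod_filter_nondiv; case: ifP => // py.
  by have := rj_le_maxr l p_gt0 (negbT py); rewrite rjE; lia.
have nz_sum : ~~ (p %| 0 + sumn nz) by rewrite add0n dvdn_sumn_filter_nondiv.
have [s nzs ps] := balanced_arrangement (filter_all _ l) nz_sum bal.
have pcs : pcumulative p s.
  rewrite pcumulativeE ps andbT.
  by apply: contraNneq nz_sum => s0; rewrite (perm_sumn nzs) s0.
have [d ld pd] := pcumulative_perm_filter_nondiv nzs pcs.
exact: cp_neq0 ld pd.
Qed.
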